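(* Let $G=(V,E)$ be a finite simple undirected graph of maximum degree at most $3$, let $M^*$ be a maximum matching of $G$, and let $M$ be the matching output by any run of the \textsc{1-2-MinGreedy} algorithm on $G$. Then $|M|\geq \frac{2}{3}|M^*|$.
   Context: The (deterministic) \textsc{1-2-MinGreedy} algorithm starts with $M=\emptyset$ and repeats until no edges remain in the current graph (initially $G$): if every node has current degree at least $3$, it selects an arbitrary edge $\{u,v\}$; otherwise it selects an arbitrary node $u$ of minimum non-zero current degree and an arbitrary neighbor $v$ of $u$. It then adds $\{u,v\}$ to $M$ and removes all edges incident with $u$ or $v$ from the current graph. All arbitrary choices may be made adversarially; the claim holds for every run. (Every run of the deterministic \textsc{MinGreedy} algorithm, which always selects a node of minimum non-zero current degree and an arbitrary neighbor, is also a run of \textsc{1-2-MinGreedy}.) *)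

From mathcomp Require Import all_boot.
Set Implicit Arguments. Unset Strict Implicit. Unset Printing Implicit Defensive.

Section Graph.
Variables (T : finType) (e : rel T).

Definition simple_graph : Prop := irreflexive e /\ symmetric e.

Definition deg (x : T) : nat := #|[set y | e x y]|.

(* Current graph after the nodes in D have been matched (all edges incident
   with a node of D removed): edge x y survives iff neither endpoint is in D. *)
Definition live (D : {set T}) (x y : T) : bool :=
  [&& e x y, x \notin D & y \notin D].

Definition cdeg (D : {set T}) (x : T) : nat := #|[set y | live D x y]|.

(* Allowed choice of {u,v} in the current graph (D) by 1-2-MinGreedy:
   {u,v} is a current edge and either every node of non-zero current degree
   has current degree >= 3 (arbitrary edge), or u has minimum non-zero
   current degree (and v is an arbitrary neighbour of u). *)
Definition allowed (D : {set T}) (u v : T) : Prop :=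
  live D u v /\
  ((forall x, 0 < cdeg D x -> 3 <= cdeg D x) \/
   (forall x, 0 < cdeg D x -> cdeg D u <= cdeg D x)).

Fixpoint run_from (D : {set T}) (s : seq (T * T)) : Prop :=
  match s with
  | [::] => forall x y, ~~ live D x y
  | (u, v) :: s' => allowed D u v /\ run_from (D :|: [set u; v]) s'
  end.

Definition greedy_run (s : seq (T * T)) : Prop := run_from set0 s.

Definition run_matching (s : seq (T * T)) : {set {set T}} :=
  [set [set p.1; p.2] | p in s].

Definition is_matching (M : {set {set T}}) : Prop :=
  (forall S, S \in M -> exists x y, e x y /\ S = [set x; y]) /\
  (forall S1 S2, S1 \in M -> S2 \in M -> S1 != S2 -> [disjoint S1 & S2]).

Definition maximum_matching (M : {set {set T}}) : Prop :=
  is_matching M /\ forall N, is_matching N -> #|N| <= #|M|.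

End Graph.

From mathcomp Require Import all_boot zify.
Set Implicit Arguments. Unset Strict Implicit. Unset Printing Implicit Defensive.

(* Let the current graph be G minus the vertices matched so far, nu its
   matching number, z its number of non-isolated vertices and p its number of
   vertices of degree one, and Phi = max (nu + ceil(z/2)) (z - floor(p/2)).
   Initially Phi >= 2 nu = 2 |M*|, when the run stops Phi = 0, and a single
   step lowers Phi by at most 3: matching a vertex of degree one destroys at
   most one edge of a maximum matching, while otherwise all degrees are at
   least 2 and maximum degree 3 bounds the number of vertices the step leaves
   isolated or of degree one. *)

Lemma cardsD2 (T : finType) (A : {set T}) u v : u != v ->
  #|A| = (u \in A) + (v \in A) + #|A :\: [set u; v]|.
Proof.
move=> neq_uv; rewrite (cardsD1 u A) (cardsD1 v (A :\ u)) in_setD1 eq_sym neq_uv.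
by rewrite setDDl addnA.
Qed.

Lemma card_blocks_meeting (T : finType) (P : {set {set T}}) (W : {set T}) :
  trivIset P -> #|[set B in P | ~~ [disjoint B & W]]| <= #|W|.
Proof.
move=> trivP; apply: leq_trans (leq_imset_card (pblock P) W); apply: subset_leq_card.
apply/subsetP=> B; rewrite inE => /andP[PB /pred0Pn[w /andP[Bw Ww]]].
by apply/imsetP; exists w; rewrite ?(def_pblock trivP PB Bw).
Qed.

Section Matching.
Variables (T : finType) (r : rel T).

Definition matchingb (M : {set {set T}}) : bool :=
  [forall S in M, [exists x, [exists y, r x y && (S == [set x; y])]]] && trivIset M.

Lemma matchingP M : reflect (is_matching r M) (matchingb M).
Proof.
apply: (iffP andP) => [[/forall_inP edgeM /trivIsetP disjM] | [edgeM disjM]]; split=> //.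
- by move=> S /edgeM /existsP[x /existsP[y /andP[rxy /eqP ->]]]; exists x, y.
- apply/forall_inP=> S /edgeM[x [y [rxy ->]]].
  by apply/existsP; exists x; apply/existsP; exists y; rewrite rxy eqxx.
- exact/trivIsetP.
Qed.

Definition matching_number : nat := \max_(M | matchingb M) #|M|.

Lemma leq_matching_number M : is_matching r M -> #|M| <= matching_number.
Proof. by move/matchingP=> mM; apply: (leq_bigmax_cond M mM). Qed.

Lemma matching_set0 : is_matching r set0.
Proof. by split=> S; rewrite inE. Qed.

Lemma matching_number_witness :
  exists2 M, is_matching r M & #|M| = matching_number.
Proof.
have : 0 < #|[pred M | matchingb M]|.
  by apply/card_gt0P; exists set0; rewrite inE; apply/matchingP/matching_set0.
case/(eq_bigmax_cond (fun M : {set {set T}} => #|M|)) => M.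
by rewrite inE => /matchingP mM maxM; exists M; rewrite // /matching_number -maxM.
Qed.

Lemma card_cover_matching M : irreflexive r -> is_matching r M -> #|cover M| = 2 * #|M|.
Proof.
move=> irr_r [edgeM disjM].
move/trivIsetP/eqP: disjM => <-; rewrite mulnC -sum_nat_const.
apply: eq_bigr => S /edgeM[x [y [rxy ->]]].
by rewrite cards2; case: eqP rxy => [->|]; rewrite ?irr_r.
Qed.

End Matching.

Definition phi (n z p : nat) : nat := maxn (n + uphalf z) (z - p./2).

Lemma phi_pendant_step n n' z' k p p' :
  n <= n' + 1 -> k <= 2 -> p' + 2 * k <= p.+1 ->
  phi n (z' + 2 + k) p <= 3 + phi n' z' p'.
Proof. by rewrite /phi; lia. Qed.

Lemma phi_inner_step n n' z' k p' :
  n <= n' + 2 -> 2 * n <= z' + 2 + k -> k <= 1 -> p' + 2 * k <= 3 ->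
  phi n (z' + 2 + k) 0 <= 3 + phi n' z' p'.
Proof. by rewrite /phi; lia. Qed.

Section Greedy.
Variables (T : finType) (e : rel T).
Hypotheses (e_irr : irreflexive e) (e_sym : symmetric e).
Hypothesis deg_le3 : forall x, deg e x <= 3.

Definition nbr (D : {set T}) (x : T) : {set T} := [set y | live e D x y].

Lemma live_sym D : symmetric (live e D).
Proof. by move=> x y; rewrite /live e_sym [(x \notin D) && _]andbC. Qed.

Lemma live_irr D : irreflexive (live e D).
Proof. by move=> x; rewrite /live e_irr. Qed.

Lemma live_neq D x y : live e D x y -> x != y.
Proof. by apply: contraTneq => ->; rewrite live_irr. Qed.

Lemma live_setU D U x y :
  live e (D :|: U) x y = [&& live e D x y, x \notin U & y \notin U].
Proof.
rewrite /live !inE !negb_or.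
by case: (e x y); case: (x \in D); case: (y \in D); case: (x \in U); case: (y \in U).
Qed.

Lemma cdeg_le3 D x : cdeg e D x <= 3.
Proof.
apply: leq_trans (deg_le3 x); apply/subset_leq_card/subsetP=> y.
by rewrite !inE => /and3P[].
Qed.

Lemma cdeg_gt0 D x y : live e D x y -> 0 < cdeg e D x.
Proof. by move=> lxy; apply/card_gt0P; exists y; rewrite inE. Qed.

Lemma cdeg_in (D : {set T}) x : x \in D -> cdeg e D x = 0.
Proof.
move=> Dx; apply/eqP; rewrite cards_eq0; apply/eqP/setP=> y.
by rewrite !inE /live Dx andbF.
Qed.

Lemma cdeg_setU2 D u v x : u != v -> x \notin [set u; v] ->
  cdeg e D x = live e D x u + live e D x v + cdeg e (D :|: [set u; v]) x.
Proof.
move=> neq_uv Ux; rewrite /cdeg (cardsD2 _ neq_uv) !inE; congr (_ + _).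
by apply: eq_card=> y; rewrite in_setD [in RHS]inE live_setU Ux andbC inE.
Qed.

Definition active D := [set x | 0 < cdeg e D x].
Definition pendant D := [set x | cdeg e D x == 1].
Definition stranded D u v := active D :\: [set u; v] :\: active (D :|: [set u; v]).

Local Notation nu D := (matching_number (live e D)).

Lemma matching_number_le_active D : 2 * nu D <= #|active D|.
Proof.
have [M matchM <-] := matching_number_witness (live e D).
rewrite -(card_cover_matching (@live_irr D) matchM).
apply/subset_leq_card/subsetP=> x /bigcupP[S /matchM.1[y [z [lyz ->]]]].
rewrite in_set2 inE => /orP[]/eqP->; first exact: cdeg_gt0 lyz.
by apply: (@cdeg_gt0 _ _ y); rewrite live_sym.
Qed.

Lemma matching_number_setU D (U W : {set T}) :
  (forall x y, live e D x y -> x \in U -> (x \in W) || (y \in W)) ->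
  nu D <= nu (D :|: U) + #|W|.
Proof.
move=> coverW; have [M [edgeM disjM] <-] := matching_number_witness (live e D).
set kept := [set S in M | [disjoint S & U]].
set hit := [set S in M | ~~ [disjoint S & W]].
have kept_matching : is_matching (live e (D :|: U)) kept.
  split=> [S | S1 S2]; rewrite !inE.
    case/andP=> /edgeM[x [y [lxy ->]]] disSU; exists x, y; split=> //.
    by rewrite live_setU lxy !(disjointFr disSU) // !inE eqxx ?orbT.
  by case/andP=> MS1 _ /andP[MS2 _]; apply: disjM.
have M_sub : M \subset kept :|: hit.
  apply/subsetP=> S MS; rewrite !inE MS /= -!setI_eq0.
  case: (boolP (S :&: U == set0)) => //= /set0Pn[x /setIP[Sx Ux]].
  have [y [lxy Sy]] : exists y, live e D x y /\ y \in S.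
    case/edgeM: MS Sx => a [b [lab ->]]; rewrite in_set2 => /orP[]/eqP->.
      by exists b; rewrite !inE eqxx orbT.
    by exists a; rewrite live_sym !inE eqxx.
  by apply/set0Pn; case/orP: (coverW x y lxy Ux); [exists x | exists y]; apply/setIP.
have := leq_matching_number kept_matching.
have : #|hit| <= #|W| := card_blocks_meeting W (introT trivIsetP disjM).
have := subset_leq_card M_sub; rewrite cardsU.
lia.
Qed.

Lemma notin_setU2_cdeg D u v x :
  0 < cdeg e (D :|: [set u; v]) x -> x \notin [set u; v].
Proof. by apply: contraTN => Ux; rewrite cdeg_in // inE Ux orbT. Qed.

Lemma card_active_step D u v : live e D u v ->
  #|active D| = #|active (D :|: [set u; v])| + 2 + #|stranded D u v|.
Proof.
move=> luv; have neq_uv := live_neq luv.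
have U_sub : [set u; v] \subset active D.
  apply/subsetP=> x; rewrite !inE => /orP[]/eqP->; first exact: cdeg_gt0 luv.
  by apply: (@cdeg_gt0 _ _ u); rewrite live_sym.
have active_sub : active (D :|: [set u; v]) \subset active D :\: [set u; v].
  apply/subsetP=> x; rewrite inE => pos'; have Ux := notin_setU2_cdeg pos'.
  by rewrite in_setD Ux inE (cdeg_setU2 D neq_uv Ux) ltn_addl.
rewrite -(cardsID [set u; v] (active D)) (setIidPr U_sub) cards2 neq_uv.
rewrite -(cardsID (active (D :|: [set u; v])) _) (setIidPr active_sub).
by rewrite /stranded; lia.
Qed.

Lemma strandedP D u v x : x \in stranded D u v ->
  [/\ x \notin [set u; v], 0 < cdeg e D x & cdeg e (D :|: [set u; v]) x = 0].
Proof. by rewrite !inE negb_or -eqn0Ngt => /and3P[/eqP-> ->]. Qed.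

Lemma pendant_setU2 D u v x : x \in pendant (D :|: [set u; v]) ->
  [/\ x \notin [set u; v], x \notin stranded D u v & cdeg e (D :|: [set u; v]) x = 1].
Proof.
rewrite inE => /eqP deg1.
have Ux : x \notin [set u; v] by apply: (@notin_setU2_cdeg D); rewrite deg1.
by split=> //; apply/negP=> /strandedP[_ _]; rewrite deg1.
Qed.

Lemma cdeg1_nbr D u v y : live e D u v -> cdeg e D u = 1 -> live e D u y -> y = v.
Proof.
move=> luv /eqP/cards1P[z nbr_u] luy.
have : y \in [set z] by rewrite -nbr_u inE.
have : v \in [set z] by rewrite -nbr_u inE.
by rewrite !inE => /eqP-> /eqP->.
Qed.

Lemma pendant_step_counts D u v : live e D u v -> cdeg e D u = 1 ->
  #|stranded D u v| <= 2 /\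
  #|pendant (D :|: [set u; v])| + 2 * #|stranded D u v| <= #|pendant D|.+1.
Proof.
move=> luv degu1; have neq_uv := live_neq luv.
set K := stranded D u v; set A := nbr D v :\ u.
have only_v y : live e D y u -> y = v.
  by rewrite live_sym; apply: cdeg1_nbr.
have cdeg_split x : x \notin [set u; v] ->
    cdeg e D x = live e D x v + cdeg e (D :|: [set u; v]) x.
  move=> Ux; rewrite (cdeg_setU2 D neq_uv Ux); case lxu: (live e D x u) => //.
  by move: Ux; rewrite (only_v _ lxu) !inE eqxx orbT.
have cardA : #|A| <= 2.
  by have := cdeg_le3 D v; rewrite /cdeg -/(nbr D v) (cardsD1 u) inE live_sym luv.
have K_sub : K \subset A :&: pendant D.
  apply/subsetP=> x /strandedP[Ux pos deg0].
  move: pos; rewrite cdeg_split // deg0 addn0 lt0b => lxv.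
  have xu : x != u by apply: contraNneq Ux => ->; rewrite !inE eqxx.
  by rewrite in_setI in_setD1 xu !inE live_sym lxv cdeg_split // deg0 lxv.
have uK : u \notin K by apply/negP=> /strandedP[]; rewrite !inE eqxx.
have uK_sub : u |: K \subset pendant D.
  apply/subsetP=> x /setU1P[-> | /(subsetP K_sub)/setIP[]//]; by rewrite inE degu1.
have pendant_sub : pendant (D :|: [set u; v]) \subset
    (pendant D :\: (u |: K)) :|: (A :\: K).
  apply/subsetP=> x /pendant_setU2[Ux]; rewrite -/K => xK deg1.
  have xu : x != u by apply: contraNneq Ux => ->; rewrite !inE eqxx.
  apply/setUP; case lxv: (live e D x v); [right | left].
    by rewrite in_setD xK in_setD1 xu inE live_sym lxv.
  by rewrite in_setD in_setU1 negb_or xu xK inE cdeg_split // lxv deg1.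
have KA : K \subset A by apply: subset_trans K_sub (subsetIl _ _).
have := subset_leq_card pendant_sub; rewrite cardsU (cardsDS uK_sub) (cardsDS KA).
have := subset_leq_card uK_sub; have := subset_leq_card KA.
by rewrite cardsU1 uK; lia.
Qed.

Lemma inner_step_counts D u v : live e D u v ->
  (forall x, 0 < cdeg e D x -> 2 <= cdeg e D x) ->
  cdeg e D u = 2 \/ (forall x, 0 < cdeg e D x -> 3 <= cdeg e D x) ->
  #|stranded D u v| <= 1 /\
  #|pendant (D :|: [set u; v])| + 2 * #|stranded D u v| <= 3.
Proof.
move=> luv min2 deg_cases; have neq_uv := live_neq luv.
set K := stranded D u v; set P' := pendant (D :|: [set u; v]).
set A := nbr D u :\ v; set B := nbr D v :\ u.
have memAB x : x \notin [set u; v] ->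
    (x \in A) = live e D x u /\ (x \in B) = live e D x v.
  rewrite !inE negb_or => /andP[xu xv].
  by rewrite xu xv ![live e D _ x]live_sym.
have cardA : #|A|.+1 = cdeg e D u.
  by rewrite /cdeg -/(nbr D u) (cardsD1 v (nbr D u)) inE luv.
have cardB : #|B| <= 2.
  by have := cdeg_le3 D v; rewrite /cdeg -/(nbr D v) (cardsD1 u) inE live_sym luv.
have K_sub : K \subset A :&: B.
  apply/subsetP=> x /strandedP[Ux pos deg0]; rewrite in_setI.
  have [-> ->] := memAB x Ux.
  by have := min2 x pos; rewrite (cdeg_setU2 D neq_uv Ux) deg0; lia.
have P'_sub : P' \subset (A :|: B) :\: K.
  apply/subsetP=> x /pendant_setU2[Ux]; rewrite -/K => xK deg1.
  have [inA inB] := memAB x Ux; have := min2 x.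
  by rewrite in_setD xK in_setU inA inB (cdeg_setU2 D neq_uv Ux) deg1; lia.
case: deg_cases => [degu2 | min3].
  have := subset_leq_card K_sub; have := subset_leq_card (subsetIl A B).
  have := subset_leq_card P'_sub; rewrite cardsDS; last first.
    by apply: subset_trans K_sub _; apply/subsetP=> x /setIP[Ax _]; apply/setUP; left.
  by rewrite cardsU; lia.
have K0 : #|K| = 0.
  apply/eqP; rewrite cards_eq0 -subset0; apply/subsetP=> x /strandedP[Ux pos deg0].
  exfalso; have := min3 x pos; rewrite (cdeg_setU2 D neq_uv Ux) deg0; lia.
have P'_subA : P' \subset A.
  apply/subsetP=> x /pendant_setU2[Ux _ deg1]; have [-> _] := memAB x Ux.
  by have := min3 x; rewrite (cdeg_setU2 D neq_uv Ux) deg1; lia.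
have := subset_leq_card P'_subA; have := cdeg_le3 D u.
by rewrite K0 -cardA; lia.
Qed.

Definition potential D := phi (nu D) #|active D| #|pendant D|.

Lemma potential_step D u v : allowed e D u v ->
  potential D <= 3 + potential (D :|: [set u; v]).
Proof.
case=> luv choice_u; rewrite /potential (card_active_step luv).
have [degu1 | degu_ne1] := eqVneq (cdeg e D u) 1.
  have [K_le P'_le] := pendant_step_counts luv degu1.
  apply: phi_pendant_step => //; rewrite -(cards1 v).
  apply: matching_number_setU => x y lxy; rewrite !inE => /orP[/eqP Ex | -> //].
  by rewrite Ex in lxy; rewrite (cdeg1_nbr luv degu1 lxy) eqxx orbT.
have degu_gt0 := cdeg_gt0 luv.
have min2 x : 0 < cdeg e D x -> 2 <= cdeg e D x.
  by move=> pos; case: choice_u => /(_ x pos); lia.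
have [K_le P'_le] : #|stranded D u v| <= 1 /\
    #|pendant (D :|: [set u; v])| + 2 * #|stranded D u v| <= 3.
  apply: inner_step_counts => //.
  have [degu2 | degu_ne2] := eqVneq (cdeg e D u) 2; [by left | right].
  by move=> x pos; case: choice_u => /(_ x pos); lia.
have -> : #|pendant D| = 0.
  apply/eqP; rewrite cards_eq0 -subset0; apply/subsetP=> x; rewrite inE => /eqP deg1.
  by have := min2 x; rewrite deg1; lia.
have nu_le : nu D <= nu (D :|: [set u; v]) + 2.
  apply: leq_trans (matching_number_setU (U := [set u; v]) (W := [set u; v]) _) _ => [x y _ -> // |].
  by rewrite leq_add2l cards2; case: (u != v).
apply: phi_inner_step => //.
by rewrite -(card_active_step luv) matching_number_le_active.
Qed.

Lemma potential_final D : (forall x y, ~~ live e D x y) -> potential D = 0.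
Proof.
move=> no_edge; have active0 : #|active D| = 0.
  apply/eqP; rewrite cards_eq0 -subset0; apply/subsetP=> x; rewrite inE.
  by case/card_gt0P=> y; rewrite inE (negbTE (no_edge x y)).
by have := matching_number_le_active D; rewrite /potential /phi active0; lia.
Qed.

Lemma potential_run D s : run_from e D s -> potential D <= 3 * size s.
Proof.
elim: s D => [|[u v] s IH] D /=; first by move/potential_final->.
by case=> allowed_uv /IH; have := potential_step allowed_uv; lia.
Qed.

End Greedy.

Lemma run_matching_cons (T : finType) (p : T * T) s :
  run_matching (p :: s) = [set p.1; p.2] |: run_matching s.
Proof.
apply/setP=> S; apply/imsetP/setU1P => [[q] | [-> | /imsetP[q sq ->]]].
- by rewrite in_cons => /predU1P[-> | sq] ->; [left | right; apply/imsetP; exists q].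
- by exists p; rewrite ?mem_head.
- by exists q; rewrite // in_cons sq orbT.
Qed.

Lemma run_from_disjoint (T : finType) (e : rel T) D s :
  run_from e D s -> {in run_matching s, forall S : {set T}, [disjoint S & D]}.
Proof.
elim: s D => [|[u v] s IH] D /=; first by move=> _ S /imsetP[].
case=> -[luv _] /IH disj S; rewrite run_matching_cons => /setU1P[-> | /disj].
  case/and3P: luv => _ uD vD; rewrite disjoint_subset.
  by apply/subsetP=> x; rewrite !inE => /orP[]/eqP->.
by apply: disjointWr; apply: subsetUl.
Qed.

Lemma card_run_matching (T : finType) (e : rel T) D s :
  run_from e D s -> #|run_matching s| = size s.
Proof.
elim: s D => [|[u v] s IH] D /=.
  by move=> _; apply/eqP; rewrite cards_eq0; apply/eqP/setP=> S; rewrite inE; apply/imsetP=> -[].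
case=> _ run; rewrite run_matching_cons cardsU1 (IH _ run) /=.
suff -> : [set u; v] \notin run_matching s by [].
apply/negP=> /(run_from_disjoint run)/disjointFr/(_ (set21 u v)).
by rewrite !inE eqxx orbT.
Qed.

Theorem theorem1 (T : finType) (e : rel T) (Mstar : {set {set T}})
    (s : seq (T * T)) :
  simple_graph e ->
  (forall x : T, deg e x <= 3) ->
  maximum_matching e Mstar ->
  greedy_run e s ->
  2 * #|Mstar| <= 3 * #|run_matching s|.
Proof.
move=> [e_irr e_sym] deg_le3 [[edgeM disjM] _] run.
have Mstar_live : is_matching (live e set0) Mstar.
  by split=> // S /edgeM[x [y [exy ->]]]; exists x, y; rewrite /live !inE exy.
have := leq_matching_number Mstar_live.
have := matching_number_le_active e_irr e_sym set0.
have := potential_run e_irr e_sym deg_le3 run.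
by rewrite (card_run_matching run) /potential /phi; lia.
Qed.
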